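(* Let $(U,V)$ be a jointly symmetric random vector with uniform margins and distribution function (copula) $C$, i.e. $(U,V)\stackrel{d}{=}(1-U,V)\stackrel{d}{=}(U,1-V)$. Let $T_\vee(u)=|2u-1|$ and let $C^*$ be the distribution function of $(T_\vee(U),T_\vee(V))$. Then for all $u,v\in[0,1]$, $$C(u,v)=\frac{2u+2v-1+(-1)^{\mathbf{1}\{(u-0.5)(v-0.5)<0\}}\,C^*\big(T_\vee(u),T_\vee(v)\big)}{4}.$$
   Context: $\mathbf{1}\{\cdot\}$ denotes the indicator function. *)

From HB Require Import structures.
From mathcomp Require Import all_boot all_order all_algebra.
From mathcomp Require Import all_classical all_reals all_analysis.
Set Implicit Arguments. Unset Strict Implicit. Unset Printing Implicit Defensive.
Import Order.TTheory GRing.Theory Num.Theory.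
Local Open Scope classical_set_scope.
Local Open Scope ring_scope.

Definition Tvee {R : realType} (u : R) : R := `|2 * u - 1|.

Definition jdf {R : realType} {d : measure_display} {T : measurableType d}
  (P : probability T R) (X Y : T -> R) (x y : R) : R :=
  fine (P [set w | X w <= x /\ Y w <= y]).

Definition uniform01 {R : realType} {d : measure_display} {T : measurableType d}
  (P : probability T R) (X : T -> R) : Prop :=
  forall x : R, 0 <= x <= 1 -> P [set w | X w <= x] = x%:E.

Definition same_law2 {R : realType} {d : measure_display} {T : measurableType d}
  (P : probability T R) (X1 Y1 X2 Y2 : T -> R) : Prop :=
  forall A : set (R * R), measurable A ->
    P ((fun w => (X1 w, Y1 w)) @^-1` A) = P ((fun w => (X2 w, Y2 w)) @^-1` A).

From HB Require Import structures.
From mathcomp Require Import all_boot all_order all_algebra.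
From mathcomp Require Import all_classical all_reals all_analysis.
From mathcomp Require Import lra.
Import Order.TTheory GRing.Theory Num.Theory.
Local Open Scope classical_set_scope.
Local Open Scope ring_scope.

(* Reflecting one coordinate complements the copula: since (1 - U, V) has the
   law of (U, V) and the uniform margin of U has no atoms,
   C(1 - u, v) = P(U >= u, V <= v) = v - C(u, v), and likewise in v.  The event
   {T(U) <= T(u), T(V) <= T(v)} is the rectangle [m, 1 - m] x [n, 1 - n] with
   m = min(u, 1 - u), n = min(v, 1 - v); by the two reflection identities its
   C-volume is 4 C(m, n) - (2m + 2n - 1).  Moving back from (m, n) to (u, v)
   reflects each coordinate lying above 1/2, and each reflection changes the
   sign of 4 C(u, v) - (2u + 2v - 1); hence the factor (-1)^1{(u-1/2)(v-1/2)<0}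
   (a coordinate equal to 1/2 is its own reflection, and there that quantity
   vanishes). *)

Lemma Tvee_reflect {R : realType} (u : R) : Tvee (1 - u) = Tvee u.
Proof. by rewrite /Tvee -normrN; congr `|_|; lra. Qed.

Lemma Tvee_le_half {R : realType} (u z : R) :
  u <= 2^-1 -> (Tvee z <= Tvee u) = (z \in `[u, 1 - u]).
Proof.
move=> hu; rewrite in_itv /= /Tvee (ler0_norm (x := 2 * u - 1)); last by lra.
by rewrite ler_norml; apply/idP/idP => /andP[? ?]; apply/andP; split; lra.
Qed.

Section reflection_decomposition.
Context {R : realType}.
Variables (C Cs : R -> R -> R).
Hypothesis C_reflectl : forall x y, 0 <= x <= 1 -> 0 <= y <= 1 ->
  C (1 - x) y = y - C x y.
Hypothesis C_reflectr : forall x y, 0 <= x <= 1 -> 0 <= y <= 1 ->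
  C x (1 - y) = x - C x y.
Hypothesis Cs_volume : forall u v, 0 <= u <= 2^-1 -> 0 <= v <= 2^-1 ->
  Cs (Tvee u) (Tvee v) = C (1 - u) (1 - v) - C u (1 - v) - C (1 - u) v + C u v.

Lemma Cs_Tvee_half u v : 0 <= u <= 2^-1 -> 0 <= v <= 2^-1 ->
  Cs (Tvee u) (Tvee v) = 4 * C u v - (2 * u + 2 * v - 1).
Proof.
move=> hu hv; have hu1 : 0 <= u <= 1 by lra.
have hv1 : 0 <= v <= 1 by lra.
have hv' : 0 <= 1 - v <= 1 by lra.
by rewrite Cs_volume // !C_reflectl // !C_reflectr //; lra.
Qed.

Lemma C_same_side u v : 0 <= u <= 1 -> 0 <= v <= 1 ->
  0 <= (u - 2^-1) * (v - 2^-1) -> 4 * C u v = 2 * u + 2 * v - 1 + Cs (Tvee u) (Tvee v).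
Proof.
move=> hu hv huv.
have [[hu2 hv2]|[hu2 hv2]] : (u <= 2^-1 /\ v <= 2^-1) \/ (2^-1 <= u /\ 2^-1 <= v).
  by case: (leP u 2^-1) => ?; case: (leP v 2^-1) => ?; [left|nra|nra|right]; lra.
  by rewrite Cs_Tvee_half //; lra.
have hu' : 0 <= 1 - u <= 1 by lra.
rewrite -(Tvee_reflect u) -(Tvee_reflect v) Cs_Tvee_half; try lra.
by rewrite C_reflectl ?C_reflectr //; lra.
Qed.

Lemma C_opposite_sides u v : 0 <= u <= 1 -> 0 <= v <= 1 ->
  (u - 2^-1) * (v - 2^-1) < 0 -> 4 * C u v = 2 * u + 2 * v - 1 - Cs (Tvee u) (Tvee v).
Proof.
move=> hu hv huv; have hv' : 0 <= 1 - v <= 1 by lra.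
have := C_same_side u (1 - v) hu hv'.
by rewrite Tvee_reflect C_reflectr //; nra.
Qed.

Lemma reflection_decomposition u v : 0 <= u <= 1 -> 0 <= v <= 1 ->
  C u v = (2 * u + 2 * v - 1
           + (-1) ^+ nat_of_bool ((u - 2^-1) * (v - 2^-1) < 0) * Cs (Tvee u) (Tvee v)) / 4.
Proof.
move=> hu hv; case: ltP => huv /=.
  by rewrite expr1 mulN1r; have := C_opposite_sides u v hu hv huv; lra.
by rewrite expr0 mul1r; have := C_same_side u v hu hv huv; lra.
Qed.

End reflection_decomposition.

Definition joint_prob {R : realType} {d : measure_display} {T : measurableType d}
  (P : probability T R) (X Y : T -> R) (A B : set R) : R :=
  fine (P (X @^-1` A `&` Y @^-1` B)).

Lemma joint_probC {R : realType} {d : measure_display} {T : measurableType d}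
  (P : probability T R) (X Y : T -> R) A B :
  joint_prob P X Y A B = joint_prob P Y X B A.
Proof. by rewrite /joint_prob setIC. Qed.

Lemma jdfE {R : realType} {d : measure_display} {T : measurableType d}
  (P : probability T R) (X Y : T -> R) x y :
  jdf P X Y x y = joint_prob P X Y `]-oo, x] `]-oo, y].
Proof. by rewrite /joint_prob !set_itvNyc. Qed.

Section joint_prob.
Context {R : realType} {d : measure_display} {T : measurableType d}.
Variables (P : probability T R) (X Y : T -> R).
Hypotheses (mX : measurable_fun setT X) (mY : measurable_fun setT Y).
Local Notation pr := (joint_prob P X Y).

Lemma measurable_joint_event {A B : set R} : measurable A -> measurable B ->
  measurable (X @^-1` A `&` Y @^-1` B).
Proof.
move=> mA mB; rewrite -[X @^-1` A]setTI -[Y @^-1` B]setTI.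
exact: measurableI (mX measurableT _ mA) (mY measurableT _ mB).
Qed.

Lemma joint_prob_itv_split (a x y : itv_bound R) B :
  (a <= x)%O -> (x <= y)%O -> measurable B ->
  pr [set` Interval a y] B = pr [set` Interval a x] B + pr [set` Interval x y] B.
Proof.
move=> ax xy mB; rewrite /joint_prob (itv_bndbnd_setU ax xy) preimage_setU setIUl.
rewrite measureU ?fineD ?fin_num_measure //; try exact: measurable_joint_event.
apply/seteqP; split => // w [[/= + _] [/= + _]]; rewrite !itv_boundlr.
move=> /andP[_ wx] /andP[xw _].
by have := le_trans wx xw; rewrite bnd_simp ltxx.
Qed.

Lemma le_joint_prob A A' B B' : measurable A -> measurable B ->
  measurable A' -> measurable B' -> A `<=` A' -> B `<=` B' -> pr A B <= pr A' B'.
Proof.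
move=> mA mB mA' mB' sA sB.
have mE := measurable_joint_event mA mB; have mE' := measurable_joint_event mA' mB'.
rewrite /joint_prob fine_le ?fin_num_measure ?le_measure ?inE //.
by move=> w [/sA ? /sB ?].
Qed.

Section uniform_first.
Hypothesis uX : uniform01 P X.

Lemma joint_prob_NycT x : 0 <= x <= 1 -> pr `]-oo, x] setT = x.
Proof. by move=> hx; rewrite /joint_prob preimage_setT setIT set_itvNyc uX. Qed.

Lemma le_joint_prob_NycT x : x <= 1 -> x <= pr `]-oo, x] setT.
Proof.
move=> x1; have [x0|x0] := ltP x 0; last by rewrite joint_prob_NycT ?x0.
by apply: le_trans (ltW x0) _; rewrite fine_ge0.
Qed.

Lemma joint_prob_set1 a B : 0 <= a <= 1 -> measurable B -> pr [set a] B = 0.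
Proof.
move=> ha mB; apply/eqP; rewrite eq_le fine_ge0 // andbT.
apply/ler_addgt0Pr => e e0; rewrite add0r.
apply: (@le_trans _ _ (pr `]a - e, a] setT)).
  by apply: le_joint_prob => // _ ->; rewrite /= in_itv /= lexx andbT; lra.
have split_a : pr `]-oo, a] setT = pr `]-oo, a - e] setT + pr `]a - e, a] setT.
  by apply: joint_prob_itv_split; rewrite ?bnd_simp //; lra.
rewrite joint_prob_NycT // in split_a.
by have := @le_joint_prob_NycT (a - e); lra.
Qed.

Lemma joint_prob_Nyo a B : 0 <= a <= 1 -> measurable B ->
  pr `]-oo, a[ B = pr `]-oo, a] B.
Proof.
move=> ha mB; rewrite (@joint_prob_itv_split -oo%O (BLeft a) (BRight a)) ?bnd_simp //.
by rewrite set_itv1 joint_prob_set1 // addr0.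
Qed.

Lemma joint_prob_itvcc a b B : 0 <= a <= 1 -> a <= b -> measurable B ->
  pr `[a, b] B = pr `]-oo, b] B - pr `]-oo, a] B.
Proof.
move=> ha ab mB; rewrite (@joint_prob_itv_split -oo%O (BLeft a) (BRight b)) ?bnd_simp //.
by rewrite joint_prob_Nyo // addrAC subrr add0r.
Qed.

End uniform_first.
End joint_prob.

Lemma jdfC {R : realType} {d : measure_display} {T : measurableType d}
  (P : probability T R) (X Y : T -> R) x y : jdf P X Y x y = jdf P Y X y x.
Proof. by rewrite !jdfE joint_probC. Qed.

Section uniform_margins.
Context {R : realType} {d : measure_display} {T : measurableType d}.
Variables (P : probability T R) (X Y : T -> R).
Hypotheses (mX : measurable_fun setT X) (mY : measurable_fun setT Y).
Hypotheses (uX : uniform01 P X) (uY : uniform01 P Y).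
Local Notation reflect01 := (fun x : R => 1 - x).

Lemma same_law2_reflectl : same_law2 P X Y (fun w => 1 - X w) Y ->
  forall A B, measurable A -> measurable B ->
  joint_prob P X Y (reflect01 @^-1` A) B = joint_prob P X Y A B.
Proof.
move=> s A B mA mB; rewrite /joint_prob; congr fine.
exact: esym (s _ (measurableX mA mB)).
Qed.

Lemma same_law2_reflectr : same_law2 P X Y X (fun w => 1 - Y w) ->
  forall A B, measurable A -> measurable B ->
  joint_prob P X Y A (reflect01 @^-1` B) = joint_prob P X Y A B.
Proof.
move=> s A B mA mB; rewrite /joint_prob; congr fine.
exact: esym (s _ (measurableX mA mB)).
Qed.

Lemma jdf_reflectl :
  (forall A B, measurable A -> measurable B ->
    joint_prob P X Y (reflect01 @^-1` A) B = joint_prob P X Y A B) ->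
  forall x y, 0 <= x <= 1 -> 0 <= y <= 1 -> jdf P X Y (1 - x) y = y - jdf P X Y x y.
Proof.
move=> sX x y hx hy.
have -> : jdf P X Y (1 - x) y = joint_prob P X Y `[x, +oo[ `]-oo, y].
  rewrite jdfE -sX //; congr joint_prob.
  by apply/seteqP; split => z; rewrite /= !in_itv /= ?andbT; lra.
have marginal : joint_prob P X Y setT `]-oo, y] = y.
  by rewrite joint_probC joint_prob_NycT.
have split_x : joint_prob P X Y setT `]-oo, y] =
    joint_prob P X Y `]-oo, x[ `]-oo, y] + joint_prob P X Y `[x, +oo[ `]-oo, y].
  by rewrite -set_itvNyy; apply: joint_prob_itv_split.
by rewrite marginal joint_prob_Nyo // -jdfE in split_x; lra.
Qed.

Lemma joint_prob_rectangle a b c e :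
  0 <= a <= 1 -> a <= b -> 0 <= c <= 1 -> c <= e ->
  joint_prob P X Y `[a, b] `[c, e] =
    jdf P X Y b e - jdf P X Y a e - jdf P X Y b c + jdf P X Y a c.
Proof.
move=> ha ab hc ce; rewrite joint_prob_itvcc // !(joint_probC P X Y _ `[c, e]).
by rewrite !joint_prob_itvcc // !(joint_probC P Y X) !jdfE; lra.
Qed.

Lemma jdf_Tvee_half u v : u <= 2^-1 -> v <= 2^-1 ->
  jdf P (fun w => Tvee (X w)) (fun w => Tvee (Y w)) (Tvee u) (Tvee v) =
    joint_prob P X Y `[u, 1 - u] `[v, 1 - v].
Proof.
move=> hu hv; rewrite /jdf /joint_prob; congr (fine (P _)).
by apply/seteqP; split => w /=; rewrite !Tvee_le_half.
Qed.

End uniform_margins.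

Lemma jdf_reflectr {R : realType} {d : measure_display} {T : measurableType d}
  (P : probability T R) (X Y : T -> R)
  (mX : measurable_fun setT X) (mY : measurable_fun setT Y)
  (uX : uniform01 P X) (uY : uniform01 P Y) :
  (forall A B : set R, measurable A -> measurable B ->
    joint_prob P X Y A ((fun y => 1 - y) @^-1` B) = joint_prob P X Y A B) ->
  forall x y, 0 <= x <= 1 -> 0 <= y <= 1 -> jdf P X Y x (1 - y) = x - jdf P X Y x y.
Proof.
move=> sY x y hx hy; rewrite !(jdfC P X) jdf_reflectl // => A B mA mB.
by rewrite !(joint_probC P Y) sY.
Qed.

Theorem propositionC1 (R : realType) (d : measure_display) (T : measurableType d)
  (P : probability T R) (U V : T -> R)
  (mU : measurable_fun setT U) (mV : measurable_fun setT V)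
  (uU : uniform01 P U) (uV : uniform01 P V)
  (symU : same_law2 P U V (fun w => 1 - U w) V)
  (symV : same_law2 P U V U (fun w => 1 - V w)) :
  forall u v : R, 0 <= u <= 1 -> 0 <= v <= 1 ->
    jdf P U V u v =
      (2 * u + 2 * v - 1
       + (-1) ^+ nat_of_bool ((u - 2^-1) * (v - 2^-1) < 0)
         * jdf P (fun w => Tvee (U w)) (fun w => Tvee (V w)) (Tvee u) (Tvee v)) / 4.
Proof.
apply: reflection_decomposition.
- exact/jdf_reflectl/same_law2_reflectl.
- exact/jdf_reflectr/same_law2_reflectr.
- move=> u v hu hv; rewrite jdf_Tvee_half ?joint_prob_rectangle //; lra.
Qed.
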